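(* Let $2\le j<k$ be integers and consider the election $E(j,k)$ with committees $W=D_{k-2}\cup\{x,a\}$ and $W'=D_{k-2}\cup\{y,b\}$. Then $\Delta(W,a,b)=\delta(j,k)$ and $\Delta(W',b,a)=\delta(j,k)$, where $\delta(j,k)=\frac{j!}{\prod_{j'=0}^{j}(k-j')}>0$; in particular both swaps strictly increase the PAV score.
   Context: An approval election is a tuple $(N,C,(A_v)_{v\in N},k)$ with voters $N$, candidates $C$, ballots $A_v\subseteq C$ and target committee size $k$. The PAV score of $W\subseteq C$ is $\textsc{pavsc}(W)=\sum_{v\in N}\sum_{i=1}^{|A_v\cap W|}\frac1i$, and $\Delta(W,a,b)=\textsc{pavsc}((W\setminus\{a\})\cup\{b\})-\textsc{pavsc}(W)$. Let $D_\ell=\{d_1,\dots,d_\ell\}$ denote a set of dummy candidates ($D_0=\varnothing$, $D_\ell\subseteq D_{\ell+1}$). Elections $F(j,k)$, for $1\le j<k$, with candidate set $D_{k-1}\cup\{a,b\}$ and committee size $k$, are defined recursively. $F(1,k)$ has two voters with ballots $D_{k-1}\cup\{a\}$ and $D_{k-2}\cup\{b\}$. For $j>1$, take a copy of $F(j-1,k)$ with candidates $D_{k-1}\cup\{a_1,b_1\}$ and a copy of $F(j-1,k-1)$ with candidates $D_{k-2}\cup\{a_2,b_2\}$, with disjoint voter sets; in every ballot of the first copy replace $a_1$ by $b$ and $b_1$ by $a$, in every ballot of the second copy replace $a_2$ by $a$ and $b_2$ by $b$; $F(j,k)$ has the union of the two voter sets with these ballots, candidates $D_{k-1}\cup\{a,b\}$,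 and committee size $k$. The election $E(j,k)$ (for $2\le j<k$) is defined as follows: take two copies of $F(j-1,k-1)$ with disjoint voter sets $N_1,N_2$ and candidates $D_{k-2}\cup\{a_1,b_1\}$ and $D_{k-2}\cup\{a_2,b_2\}$ respectively; in ballots of voters in $N_1$ replace $a_1$ by $b$ and $b_1$ by $a$ and add a new candidate $x$; in ballots of voters in $N_2$ replace $a_2$ by $a$ and $b_2$ by $b$ and add a new candidate $y$. $E(j,k)$ has voters $N_1\cup N_2$, candidates $D_{k-2}\cup\{x,y,a,b\}$ and committee size $k$. *)

From HB Require Import structures.
From mathcomp Require Import all_boot all_order all_algebra.
Set Implicit Arguments. Unset Strict Implicit. Unset Printing Implicit Defensive.
Import Order.TTheory GRing.Theory Num.Theory.

(* Candidates: dummies d_i (i >= 1), and the named candidates a, b, x, y. *)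
Inductive cand := Dummy of nat | CA | CB | CX | CY.

Definition cand_code (c : cand) : nat + nat :=
  match c with Dummy i => inl i | CA => inr 0 | CB => inr 1 | CX => inr 2 | CY => inr 3 end.
Definition cand_decode (s : nat + nat) : cand :=
  match s with inl i => Dummy i | inr 0 => CA | inr 1 => CB | inr 2 => CX | inr _ => CY end.
Lemma cand_codeK : cancel cand_code cand_decode. Proof. by case. Qed.
HB.instance Definition _ := Equality.copy cand (can_type cand_codeK).

(* A ballot is a (duplicate-free) list of approved candidates; an election's
   voter profile is the list of ballots, one per voter. *)
Definition ballot := seq cand.
Definition profile := seq ballot.

Definition D (l : nat) : seq cand := [seq Dummy i | i <- iota 1 l].

Definition pavsc (P : profile) (W : seq cand) : rat :=
  \sum_(v <- P) \sum_(1 <= i < (count (fun c => c \in W) v).+1) (i%:R)^-1.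

Definition Delta (P : profile) (W : seq cand) (a b : cand) : rat :=
  pavsc P (b :: [seq c <- W | c != a]) - pavsc P W.

Definition swapab (c : cand) : cand :=
  match c with CA => CB | CB => CA | c => c end.

(* F(j,k): candidates D_{k-1} u {a,b}, committee size k. *)
Fixpoint F (j k : nat) : profile :=
  match j with
  | 0 => [::]
  | j'.+1 =>
      if j' is 0 then [:: D k.-1 ++ [:: CA]; D (k.-2) ++ [:: CB]]
      else [seq map swapab v | v <- F j' k] ++ F j' k.-1
  end.

(* E(j,k): candidates D_{k-2} u {x,y,a,b}, committee size k. *)
Definition E (j k : nat) : profile :=
  [seq CX :: map swapab v | v <- F j.-1 k.-1] ++ [seq CY :: v | v <- F j.-1 k.-1].

Definition delta (j k : nat) : rat :=
  (j`!)%:R / \prod_(0 <= j' < j.+1) ((k - j')%:R).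

From mathcomp Require Import all_boot all_order all_algebra.
From mathcomp Require Import ring zify.
Import Order.TTheory GRing.Theory Num.Theory.
Local Open Scope ring_scope.

(* The x-voters of E(j,k) carry the ballots of F(j-1,k-1) with a and b
   exchanged, the y-voters carry them unchanged.  Replacing a by b changes a
   voter's PAV satisfaction by a difference of two harmonic numbers depending
   only on the numbers of dummies, a's and b's on the ballot and on the number
   s of further committee members (x or y) it approves.  Summed over F(j,k)
   this gain is j!/(s+k)^_(j+1), by induction on j: the recursion
   F(j+1,k) = swap(F(j,k)) + F(j,k-1) becomes the identity
   n!/m^_(n+1) - n!/(m+1)^_(n+1) = (n+1)!/(m+1)^_(n+2).  In each swap of the
   statement one kind of voter approves one further committee member and the
   other none, and the two kinds see opposite gains, so both Deltas equal the
   gain at s = 0 minus the gain at s = 1, which is that identity once more. *)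

Definition harmonic (n : nat) : rat := \sum_(1 <= i < n.+1) i%:R^-1.

Lemma harmonicS n : harmonic n.+1 = harmonic n + n.+1%:R^-1.
Proof. by rewrite /harmonic big_nat_recr. Qed.

Lemma pavscE P W : pavsc P W = \sum_(v <- P) harmonic (count [in W] v).
Proof. by []. Qed.

Lemma eq_pavsc P W W' : W =i W' -> pavsc P W = pavsc P W'.
Proof. by move=> eqW; apply: eq_bigr => v _; rewrite (eq_count eqW). Qed.

Lemma Delta_cats1 P S c c' : c \notin S ->
  Delta P (S ++ [:: c]) c c' = pavsc P (S ++ [:: c']) - pavsc P (S ++ [:: c]).
Proof.
move=> cS; congr (_ - _); apply: eq_pavsc => d.
rewrite filter_cat /= eqxx cats0 (all_filterP _); last first.
  by apply/allP => e eS; apply: contraNneq cS => <-.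
by rewrite in_cons mem_cat mem_seq1 orbC.
Qed.

Lemma count_mem_cat2 (T : eqType) (S u : seq T) z c :
  z \notin S -> c \notin S -> z != c ->
  count [in S ++ [:: z; c]] u = (count [in S] u + count_mem z u + count_mem c u)%N.
Proof.
move=> zS cS zc; elim: u => //= w u ->; rewrite mem_cat !inE.
have [wS|_] := boolP (w \in S).
  have [wz wc] : w != z /\ w != c.
    by split; [apply: contraNneq _ zS|apply: contraNneq _ cS] => <-.
  rewrite (negbTE wz) (negbTE wc) /=; lia.
by case: (w =P z) => [->|_]; [rewrite (negbTE zc)|]; case: (w == c); lia.
Qed.

Lemma mem_D M c : (c \in D M) = if c is Dummy i then (0 < i <= M)%N else false.
Proof.
rewrite /D; case: c => [i||||]; first by rewrite mem_map ?mem_iota ?add1n // => ? ? [].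
all: by apply/mapP; case.
Qed.

Lemma count_D M t : (t <= M)%N -> count [in D M] (D t) = t.
Proof.
move=> tM; rewrite /D count_map (@eq_in_count _ _ predT) ?count_predT ?size_iota //.
by move=> i; rewrite mem_iota /= mem_D add1n ltnS => /andP[-> /leq_trans->].
Qed.

Lemma fact_div_ffact_diff (R : numFieldType) (n m : nat) : (n < m)%N ->
  n`!%:R / (m ^_ n.+1)%:R - n`!%:R / (m.+1 ^_ n.+1)%:R
  = n.+1`!%:R / (m.+1 ^_ n.+2)%:R :> R.
Proof.
move=> lt_nm; rewrite !ffactSS ffactnSr factS !natrM.
have -> : m.+1%:R = (m - n)%:R + n.+1%:R :> R by rewrite -natrD addnS subnK // ltnW.
have mn0 : (m - n)%:R != 0 :> R by rewrite pnatr_eq0 -lt0n subn_gt0.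
have F0 : (m ^_ n)%:R != 0 :> R by rewrite pnatr_eq0 -lt0n ffact_gt0 ltnW.
by field; rewrite mn0 F0 -mulrS -natrD pnatr_eq0 addnS.
Qed.

Lemma count_mem_D t c : count_mem c (D t) = (c \in D t).
Proof. by rewrite count_uniq_mem // map_inj_uniq ?iota_uniq // => ? ? []. Qed.

(* Gain of voter v when a is replaced by b in a committee made of D_M, of a,
   and of s further candidates approved by v. *)
Definition swap_gain (M s : nat) (v : ballot) : rat :=
  harmonic (s + count [in D M] v + count_mem CB v)
  - harmonic (s + count [in D M] v + count_mem CA v).

Definition profile_gain M s (P : profile) : rat := \sum_(v <- P) swap_gain M s v.

Lemma swap_gain_swapab M s v : swap_gain M s (map swapab v) = - swap_gain M s v.
Proof.
rewrite /swap_gain !count_map opprB.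
have -> : count (preim swapab [in D M]) v = count [in D M] v.
  by apply: eq_count => -[i||||] //=; rewrite !mem_D.
by congr (harmonic (_ + _) - harmonic (_ + _)); apply: eq_count => -[].
Qed.

Lemma profile_gain_cat M s P Q :
  profile_gain M s (P ++ Q) = profile_gain M s P + profile_gain M s Q.
Proof. exact: big_cat. Qed.

Lemma profile_gain_swapab M s P :
  profile_gain M s [seq map swapab v | v <- P] = - profile_gain M s P.
Proof.
by rewrite /profile_gain big_map -sumrN; apply: eq_bigr => v _; rewrite swap_gain_swapab.
Qed.

Lemma swap_gain_D_CA M s t : (t <= M)%N ->
  swap_gain M s (D t ++ [:: CA]) = - (s + t).+1%:R^-1.
Proof.
move=> tM; rewrite /swap_gain !count_cat count_D // !count_mem_D /= !mem_D /=.
by rewrite !addn0 add0n addn1 harmonicS; ring.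
Qed.

Lemma swap_gain_D_CB M s t : (t <= M)%N ->
  swap_gain M s (D t ++ [:: CB]) = (s + t).+1%:R^-1.
Proof.
move=> tM; rewrite /swap_gain !count_cat count_D // !count_mem_D /= !mem_D /=.
by rewrite !addn0 add0n addn1 harmonicS; ring.
Qed.

Lemma profile_gain_F M s j k : (0 < j < k)%N -> (k <= M.+1)%N ->
  profile_gain M s (F j k) = j`!%:R / ((s + k) ^_ j.+1)%:R.
Proof.
elim: j k => [//|[|j] IH] k /andP[_ lt_jk] le_kM.
- case: k lt_jk le_kM => [|[|t]] // _ le_kM.
  have -> : F 1 t.+2 = [:: D t.+1 ++ [:: CA]; D t ++ [:: CB]] by [].
  rewrite /profile_gain !big_cons big_nil addr0 swap_gain_D_CA // swap_gain_D_CB; last lia.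
  by rewrite !addnS -fact_div_ffact_diff // !ffactn1 fact0 !div1r addrC.
- case: k lt_jk le_kM => [|k] // lt_jk le_kM.
  rewrite [F _ _]/= profile_gain_cat profile_gain_swapab !IH; [|lia..].
  by rewrite addnS -(@fact_div_ffact_diff _ j.+1 (s + k)) 1?addrC //; lia.
Qed.

Definition xy_free (v : ballot) := (CX \notin v) && (CY \notin v).

Lemma swapab_inj : injective swapab.
Proof. by apply: (can_inj (g := swapab)); case. Qed.

Lemma xy_free_swapab v : xy_free (map swapab v) = xy_free v.
Proof.
by rewrite /xy_free -{1}[CX]/(swapab CX) -{1}[CY]/(swapab CY) !(mem_map swapab_inj).
Qed.

Lemma F_xy_free j k : all xy_free (F j k).
Proof.
elim: j k => [//|[|j] IH] k; first by rewrite /= /xy_free !mem_cat !mem_D.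
by rewrite /= all_cat all_map (eq_all xy_free_swapab) !IH.
Qed.

Lemma harmonic_sub_cons M z w u :
  z \in [:: CX; CY] -> w \in [:: CX; CY] -> xy_free u ->
  harmonic (count [in D M ++ [:: z; CB]] (w :: u))
  - harmonic (count [in D M ++ [:: z; CA]] (w :: u)) = swap_gain M (w == z) u.
Proof.
rewrite !inE => /orP[]/eqP-> /orP[]/eqP-> /andP[/count_memPn Xu /count_memPn Yu].
all: rewrite !count_mem_cat2 ?mem_D //= ?mem_D ?Xu ?Yu /swap_gain /=.
all: by congr (harmonic _ - harmonic _); lia.
Qed.

Lemma pavsc_E_sub M z j k : z \in [:: CX; CY] ->
  pavsc (E j k) (D M ++ [:: z; CB]) - pavsc (E j k) (D M ++ [:: z; CA])
  = profile_gain M (CY == z) (F j.-1 k.-1) - profile_gain M (CX == z) (F j.-1 k.-1).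
Proof.
move=> zXY; rewrite !pavscE -sumrB big_cat !big_map addrC -profile_gain_swapab.
rewrite /profile_gain big_map; congr (_ + _).
all: apply: eq_big_seq => u /(allP (F_xy_free _ _)) u_free.
  by rewrite harmonic_sub_cons ?xy_free_swapab.
by rewrite harmonic_sub_cons.
Qed.

Lemma deltaE j k : delta j k = j`!%:R / (k ^_ j.+1)%:R.
Proof. by rewrite /delta ffact_prod natr_prod big_mkord. Qed.

Lemma delta_gt0 j k : (j < k)%N -> 0 < delta j k.
Proof. by move=> lt_jk; rewrite deltaE divr_gt0 // ltr0n ?fact_gt0 ?ffact_gt0. Qed.

Theorem corollary6 (j k : nat) (hj : (2 <= j)%N) (hjk : (j < k)%N) :
  Delta (E j k) (D (k - 2) ++ [:: CX; CA]) CA CB = delta j k /\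
  Delta (E j k) (D (k - 2) ++ [:: CY; CB]) CB CA = delta j k /\
  0 < delta j k.
Proof.
case: j hj hjk => [|[|n]] // _; case: k => [|m] // lt_nm.
set M := (m.+1 - 2)%N.
have gainF s : profile_gain M s (F n.+1 m) = n.+1`!%:R / ((s + m) ^_ n.+2)%:R.
  by apply: profile_gain_F; lia.
have gain_sub : profile_gain M 0 (F n.+1 m) - profile_gain M 1 (F n.+1 m) = delta n.+2 m.+1.
  by rewrite !gainF deltaE fact_div_ffact_diff //; lia.
rewrite (catA _ [:: CX] [:: CA]) (catA _ [:: CY] [:: CB]) !Delta_cats1 ?mem_cat ?mem_D // -!catA.
split; last split; last exact: delta_gt0.
- by rewrite pavsc_E_sub.
- by rewrite -opprB pavsc_E_sub // opprB.
Qed.
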